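(* Let $\mathfrak{g}$ be a semisimple Lie algebra, $A=\mathbb{C}\oplus A_+$ with $A_+=\bigoplus_{i>0}A_i$ a $\mathbb{Z}_{\ge0}$-graded commutative unital algebra, and let $x,y:A_+\to\mathbb{C}$ be two linearly independent linear maps vanishing on $A_+^2$. Let $\{e_i\}$ be an orthonormal basis of $\mathfrak{g}$ for the Killing form and $\{e^i\}$ the dual basis of $\mathfrak{g}^*$. For $u\in\mathfrak{g}^*$ and $z:A_+\to\mathbb{C}$ let $uz$ denote the linear functional $a\otimes b\mapsto u(a)z(b)$ on $\mathfrak{g}\otimes A_+$. Then $$\varphi_{x,y}=\sum_{i=1}^{\dim\mathfrak{g}}e^ix\wedge e^iy\in\mathrm{Hom}(\Lambda^2(\mathfrak{g}\otimes A_+),\mathbb{C})$$ is a cocycle in the relative Chevalley–Eilenberg complex $C^\bullet(\mathfrak{g}\otimes A,\mathfrak{g};\mathbb{C})=\mathrm{Hom}_{\mathfrak{g}}(\Lambda^\bullet(\mathfrak{g}\otimes A_+),\mathbb{C})$ whose class in $H^2(\mathfrak{g}\otimes A,\mathfrak{g};\mathbb{C})$ is nonzero.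
   Context: $\mathfrak{g}\otimes A$ is the current Lie algebra with bracket $[a\otimes u,b\otimes v]=[a,b]\otimes uv$; it contains $\mathfrak g=\mathfrak g\otimes 1$, and $(\mathfrak g\otimes A)/\mathfrak g\cong\mathfrak g\otimes A_+$ as $\mathfrak g$-modules. $H^\bullet(\mathfrak{g}\otimes A,\mathfrak{g};\mathbb{C})$ is relative Lie algebra cohomology with trivial coefficients. *)

From HB Require Import structures.
From mathcomp Require Import all_boot all_order all_algebra.
From mathcomp Require Import reals.
From mathcomp.real_closed Require Import complex.
Set Implicit Arguments. Unset Strict Implicit. Unset Printing Implicit Defensive.
Import GRing.Theory.
Local Open Scope ring_scope.

Definition lie_bracket (K : fieldType) (g : vectType K) (br : g -> g -> g) : Prop :=
  [/\ (forall (k : K) (a b c : g), br (k *: a + b) c = k *: br a c + br b c),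
      (forall (k : K) (a b c : g), br a (k *: b + c) = k *: br a b + br a c),
      (forall a : g, br a a = 0) &
      (forall a b c : g, br a (br b c) + br b (br c a) + br c (br a b) = 0)].

(* Killing form: kappa(a,b) = tr(ad a o ad b), trace computed in the basis vbasis fullv. *)
Definition killing (K : fieldType) (g : vectType K) (br : g -> g -> g) (a b : g) : K :=
  \sum_(i < \dim {: g}%VS)
     coord (vbasis fullv) i (br a (br b (tnth (vbasis fullv) i))).

Definition lie_ideal (K : fieldType) (g : vectType K) (br : g -> g -> g)
  (I : {vspace g}) : Prop :=
  forall a u : g, u \in I -> br a u \in I.

Definition derived (K : fieldType) (g : vectType K) (br : g -> g -> g)
  (I : {vspace g}) : {vspace g} :=
  <<[seq br u v | u <- (vbasis I : seq g), v <- (vbasis I : seq g)]>>%VS.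

Definition solvable_sub (K : fieldType) (g : vectType K) (br : g -> g -> g)
  (I : {vspace g}) : Prop :=
  exists n : nat, iter n (derived br) I = 0%VS.

Definition semisimple (K : fieldType) (g : vectType K) (br : g -> g -> g) : Prop :=
  forall I : {vspace g}, lie_ideal br I -> solvable_sub br I -> I = 0%VS.

(* p i is the projection of A onto its homogeneous component A_i. *)
Definition graded_algebra (K : fieldType) (A : comAlgType K) (p : nat -> A -> A) : Prop :=
  (forall i (k : K) (a b : A), p i (k *: a + b) = k *: p i a + p i b) /\
  [/\ (forall a : A, exists N : nat, forall i, (N <= i)%N -> p i a = 0),
      (forall (a : A) (N : nat), (forall i, (N <= i)%N -> p i a = 0) ->
           a = \sum_(i < N) p i a),
      (forall i j (a : A), p i (p j a) = (if i == j then p j a else 0)),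
      (forall i j (a b : A), p (i + j)%N (p i a * p j b) = p i a * p j b) &
      (p 0%N 1 = 1 /\ forall a : A, exists k : K, p 0%N a = k%:A)].

Definition Aplus (K : fieldType) (A : comAlgType K) (p : nat -> A -> A) (u : A) : Prop :=
  p 0%N u = 0.

(* linear functional A_+ -> K (only its values on A_+ matter) *)
Definition lin_Aplus (K : fieldType) (A : comAlgType K) (p : nat -> A -> A)
  (x : A -> K) : Prop :=
  forall (k : K) (u v : A), Aplus p u -> Aplus p v -> x (k *: u + v) = k * x u + x v.

Definition lin_indep2_Aplus (K : fieldType) (A : comAlgType K) (p : nat -> A -> A)
  (x y : A -> K) : Prop :=
  forall s t : K, (forall u : A, Aplus p u -> s * x u + t * y u = 0) -> s = 0 /\ t = 0.

(* ---------- relative Chevalley-Eilenberg cochains, degrees 1 and 2 ----------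
   A linear functional on g (x) A_+ is a bilinear map g x A_+ -> K;
   a linear functional on Lambda^2 (g (x) A_+) is a map
   c : g -> A -> g -> A -> K, bilinear in (a,u) and in (b,v) on A_+, with
   c a u b v = - c b v a u.  The relative complex consists of the
   g-invariant ones (trivial coefficients). *)

Definition rel_cochain1 (K : fieldType) (g : vectType K) (br : g -> g -> g)
  (A : comAlgType K) (p : nat -> A -> A) (psi : g -> A -> K) : Prop :=
  [/\ (forall (u : A), Aplus p u ->
         forall (k : K) (a b : g), psi (k *: a + b) u = k * psi a u + psi b u),
      (forall (a : g) (k : K) (u v : A), Aplus p u -> Aplus p v ->
         psi a (k *: u + v) = k * psi a u + psi a v) &
      (forall (z a : g) (u : A), Aplus p u -> psi (br z a) u = 0)].

Definition rel_cochain2 (K : fieldType) (g : vectType K) (br : g -> g -> g)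
  (A : comAlgType K) (p : nat -> A -> A) (c : g -> A -> g -> A -> K) : Prop :=
  [/\ (forall (u v : A) (b : g), Aplus p u -> Aplus p v ->
         forall (k : K) (a a' : g), c (k *: a + a') u b v = k * c a u b v + c a' u b v),
      (forall (a b : g) (k : K) (u u' v : A), Aplus p u -> Aplus p u' -> Aplus p v ->
         c a (k *: u + u') b v = k * c a u b v + c a u' b v),
      (forall (a b : g) (u v : A), Aplus p u -> Aplus p v -> c a u b v = - c b v a u) &
      (forall (z a b : g) (u v : A), Aplus p u -> Aplus p v ->
         c (br z a) u b v + c a u (br z b) v = 0)].

(* Chevalley-Eilenberg differential of a 2-cochain, on (a1 (x) u1, a2 (x) u2, a3 (x) u3):
   dc(p1,p2,p3) = - c([p1,p2],p3) + c([p1,p3],p2) - c([p2,p3],p1),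
   with [a (x) u, b (x) v] = [a,b] (x) uv. *)
Definition ce_d2 (K : fieldType) (g : vectType K) (br : g -> g -> g)
  (A : comAlgType K) (c : g -> A -> g -> A -> K)
  (a1 : g) (u1 : A) (a2 : g) (u2 : A) (a3 : g) (u3 : A) : K :=
  - c (br a1 a2) (u1 * u2) a3 u3 + c (br a1 a3) (u1 * u3) a2 u2
  - c (br a2 a3) (u2 * u3) a1 u1.

Definition ce_d1 (K : fieldType) (g : vectType K) (br : g -> g -> g)
  (A : comAlgType K) (psi : g -> A -> K) (a : g) (u : A) (b : g) (v : A) : K :=
  - psi (br a b) (u * v).

(* phi_{x,y} = sum_i e^i x /\ e^i y, with (f /\ h)(P,Q) = f(P) h(Q) - f(Q) h(P),
   (e^i z)(a (x) u) = e^i(a) z(u), e^i = i-th coordinate in the basis e. *)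
Definition phi_xy (K : fieldType) (g : vectType K) (n : nat) (e : n.-tuple g)
  (A : comAlgType K) (x y : A -> K) (a : g) (u : A) (b : g) (v : A) : K :=
  \sum_(i < n) (coord e i a * x u * (coord e i b * y v)
                - coord e i b * x v * (coord e i a * y u)).

From HB Require Import structures.
From mathcomp Require Import all_boot all_order all_algebra.
From mathcomp Require Import reals.
From mathcomp.real_closed Require Import complex.
From mathcomp Require Import ring.
Set Implicit Arguments. Unset Strict Implicit. Unset Printing Implicit Defensive.
Import GRing.Theory.
Local Open Scope ring_scope.

(* Through the orthonormality of e for the Killing form kappa,
   phi_{x,y}(a (x) u, b (x) v) = kappa(a, b) (x(u) y(v) - x(v) y(u)).
   Invariance and symmetry of kappa make this a relative 2-cochain, and it is a
   cocycle because every term of its differential evaluates x or y on a product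
   of two elements of A_+.  A relative 1-cochain psi is g-invariant, so it
   vanishes on [g, g] (x) A_+, which is where its differential takes its
   values: coboundaries vanish on A_+-arguments.  Evaluating phi_{x,y} at
   (e_1 (x) u, e_1 (x) v) shows that it does not, since x and y are
   linearly independent. *)

Section LinearFunctions.
Variables (R : comNzRingType) (U : lmodType R) (V : zmodType) (s : GRing.Scale.law R V).
Variable f : U -> V.
Hypothesis f_lin : linear_for s f.

Let fL : {linear U -> V | s} := HB.pack f (GRing.isLinear.Build _ _ _ _ f f_lin).

Lemma linear_for_sum (I : Type) (r : seq I) (P : pred I) (F : I -> U) :
  f (\sum_(i <- r | P i) F i) = \sum_(i <- r | P i) f (F i).
Proof. exact: (linear_sum fL). Qed.

Lemma linear_for0 : f 0 = 0.
Proof. exact: (linear0 fL). Qed.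

Lemma linear_forD (a b : U) : f (a + b) = f a + f b.
Proof. exact: (linearD fL). Qed.

Lemma linear_forN (a : U) : f (- a) = - f a.
Proof. exact: (linearN fL). Qed.

Lemma linear_forB (a b : U) : f (a - b) = f a - f b.
Proof. exact: (linearB fL). Qed.

Lemma linear_forZ (k : R) (a : U) : f (k *: a) = s k (f a).
Proof. exact: (linearZ_LR fL). Qed.

End LinearFunctions.

Section LieBracket.
Variables (K : fieldType) (g : vectType K) (br : g -> g -> g).
Hypothesis br_lie : lie_bracket br.

Lemma lie_linearl (b : g) : linear (br^~ b).
Proof. by case: br_lie => brl _ _ _ k a a'; apply: brl. Qed.

Lemma lie_linearr (a : g) : linear (br a).
Proof. by case: br_lie => _ brr _ _ k b b'; apply: brr. Qed.

Lemma lie_anticomm (a b : g) : br a b = - br b a.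
Proof.
case: br_lie => _ _ brxx _; apply/eqP; rewrite -addr_eq0.
have := brxx (a + b).
rewrite (linear_forD (lie_linearl _)) !(linear_forD (lie_linearr _)) !brxx.
by rewrite add0r addr0 => ->.
Qed.

Lemma lie_ad_bracket (z a w : g) : br (br z a) w = br z (br a w) - br a (br z w).
Proof.
case: br_lie => _ _ _ jacobi; have /eqP := jacobi w z a.
rewrite [br w (br z a)]lie_anticomm [br w z]lie_anticomm.
by rewrite (linear_forN (lie_linearr a)) -addrA addrC subr_eq0 => /eqP.
Qed.

End LieBracket.

Section Trace.
Variables (K : fieldType) (V : vectType K).

Definition lin_trace (f : V -> V) : K :=
  \sum_(i < \dim {: V}) coord (vbasis fullv) i (f (tnth (vbasis fullv) i)).

Lemma lin_trace_comp (f h : V -> V) : linear f ->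
  lin_trace (f \o h) =
  \sum_(i < \dim {: V}) \sum_(j < \dim {: V})
     coord (vbasis fullv) j (h (tnth (vbasis fullv) i)) *
     coord (vbasis fullv) i (f (tnth (vbasis fullv) j)).
Proof.
move=> f_lin; rewrite /lin_trace; apply: eq_bigr => i _ /=.
rewrite {1}(coord_vbasis (memvf (h _))) (linear_for_sum f_lin) linear_sum.
by apply: eq_bigr => j _; rewrite (linear_forZ f_lin) linearZ !(tnth_nth 0).
Qed.

Lemma lin_trace_comm (f h : V -> V) : linear f -> linear h ->
  lin_trace (f \o h) = lin_trace (h \o f).
Proof.
move=> f_lin h_lin; rewrite !lin_trace_comp // exchange_big.
by apply: eq_bigr => i _; apply: eq_bigr => j _; rewrite mulrC.
Qed.

End Trace.

Lemma bilinear_orthonormalE (K : fieldType) (V : vectType K) (n : nat)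
    (e : n.-tuple V) (B : V -> V -> K) :
  basis_of fullv e -> (forall b, scalar (B^~ b)) -> (forall a, scalar (B a)) ->
  (forall i j, B (tnth e i) (tnth e j) = (i == j)%:R) ->
  forall a b, B a b = \sum_i coord e i a * coord e i b.
Proof.
move=> e_basis Bl Br e_orth a b.
rewrite {1}(coord_basis e_basis (memvf a)) (linear_for_sum (Bl b)).
apply: eq_bigr => i _; rewrite (linear_forZ (Bl b)) /=; congr (_ * _).
rewrite {1}(coord_basis e_basis (memvf b)) (linear_for_sum (Br _)) (bigD1 i) //=.
rewrite big1 => [|j /negbTE ji]; rewrite (linear_forZ (Br _)) /= -!tnth_nth e_orth.
  by rewrite eqxx mulr1 addr0.
by rewrite eq_sym ji mulr0.
Qed.

Section Killing.
Variables (K : fieldType) (g : vectType K) (br : g -> g -> g).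
Hypothesis br_lie : lie_bracket br.

Lemma killing_linearl (b : g) : scalar (killing br ^~ b).
Proof.
move=> k a a'; rewrite /killing mulr_sumr -big_split; apply: eq_bigr => i _ /=.
by rewrite (lie_linearl br_lie) linearP.
Qed.

Lemma killing_linearr (a : g) : scalar (killing br a).
Proof.
move=> k b b'; rewrite /killing mulr_sumr -big_split; apply: eq_bigr => i _ /=.
by rewrite (lie_linearl br_lie) (lie_linearr br_lie) linearP.
Qed.

Lemma killing_invariant (z a b : g) :
  killing br (br z a) b + killing br a (br z b) = 0.
Proof.
(* With ad [z, a] = [ad z, ad a], the sum is tr (ad z (ad a ad b) - (ad a ad b) ad z). *)
pose h := br a \o br b.
have h_lin : linear h by move=> k u v; rewrite /h /= !(lie_linearr br_lie).
have -> : killing br (br z a) b + killing br a (br z b) =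
          lin_trace (br z \o h) - lin_trace (h \o br z).
  rewrite /killing /lin_trace -sumrB -big_split; apply: eq_bigr => i _ /=.
  rewrite !(lie_ad_bracket br_lie) (linear_forB (lie_linearr br_lie a)) !linearB /=.
  by rewrite addrA subrK.
by rewrite lin_trace_comm ?subrr //; apply: lie_linearr.
Qed.

End Killing.

Lemma Aplus_mul (K : fieldType) (A : comAlgType K) (p : nat -> A -> A) (u v : A) :
  graded_algebra p -> Aplus p u -> Aplus p v -> Aplus p (u * v).
Proof.
case=> p_lin [p_fin p_sum p_proj p_mul _] u_pos v_pos.
have [Nu Nu_bound] := p_fin u; have [Nv Nv_bound] := p_fin v.
pose N := maxn Nu Nv.
rewrite /Aplus (p_sum u N) => [|i]; last by rewrite geq_max => /andP[/Nu_bound].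
rewrite (p_sum v N) => [|i]; last by rewrite geq_max => /andP[_ /Nv_bound].
rewrite mulr_suml (linear_for_sum (p_lin 0%N)); apply: big1 => i _.
rewrite mulr_sumr (linear_for_sum (p_lin 0%N)); apply: big1 => j _.
have [->|i_pos] := posnP i; first by rewrite u_pos mul0r (linear_for0 (p_lin 0%N)).
by rewrite -p_mul p_proj eq_sym addn_eq0 eqn0Ngt i_pos.
Qed.

Section RelativeCochains.
Variables (K : fieldType) (g : vectType K) (br : g -> g -> g).
Variables (A : comAlgType K) (p : nat -> A -> A).

Definition wedge_cochain (B : g -> g -> K) (x y : A -> K)
    (a : g) (u : A) (b : g) (v : A) : K :=
  B a b * (x u * y v - x v * y u).

Lemma rel_cochain2_ext (c c' : g -> A -> g -> A -> K) :
  (forall a u b v, c' a u b v = c a u b v) ->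
  rel_cochain2 br p c -> rel_cochain2 br p c'.
Proof.
move=> c'E [c_linl c_linr c_alt c_inv]; split=> *; rewrite !c'E.
- exact: c_linl.
- exact: c_linr.
- exact: c_alt.
- exact: c_inv.
Qed.

Lemma wedge_rel_cochain2 (B : g -> g -> K) (x y : A -> K) :
  (forall b, scalar (B^~ b)) -> (forall a b, B a b = B b a) ->
  (forall z a b, B (br z a) b + B a (br z b) = 0) ->
  lin_Aplus p x -> lin_Aplus p y -> rel_cochain2 br p (wedge_cochain B x y).
Proof.
move=> B_lin B_sym B_inv x_lin y_lin; rewrite /wedge_cochain; split.
- by move=> u v b _ _ k a a'; rewrite B_lin /=; ring.
- by move=> a b k u u' v u_pos u'_pos v_pos; rewrite x_lin // y_lin //; ring.
- by move=> a b u v _ _; rewrite B_sym; ring.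
- by move=> z a b u v _ _; rewrite -mulrDl B_inv mul0r.
Qed.

Lemma wedge_cocycle (B : g -> g -> K) (x y : A -> K) :
  (forall u v, Aplus p u -> Aplus p v -> x (u * v) = 0) ->
  (forall u v, Aplus p u -> Aplus p v -> y (u * v) = 0) ->
  forall (a1 a2 a3 : g) (u1 u2 u3 : A),
    Aplus p u1 -> Aplus p u2 -> Aplus p u3 ->
    ce_d2 br (wedge_cochain B x y) a1 u1 a2 u2 a3 u3 = 0.
Proof.
move=> x_mul y_mul a1 a2 a3 u1 u2 u3 u1_pos u2_pos u3_pos.
by rewrite /ce_d2 /wedge_cochain !x_mul // !y_mul //; ring.
Qed.

Lemma rel_coboundary1_eq0 (psi : g -> A -> K) :
  graded_algebra p -> rel_cochain1 br p psi ->
  forall (a b : g) (u v : A), Aplus p u -> Aplus p v -> ce_d1 br psi a u b v = 0.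
Proof.
move=> p_graded [_ _ psi_inv] a b u v u_pos v_pos.
by rewrite /ce_d1 psi_inv ?oppr0 //; apply: Aplus_mul.
Qed.

Lemma lin_indep2_Aplus_not_proportional (x y : A -> K) :
  lin_indep2_Aplus p x y ->
  ~ (forall u v, Aplus p u -> Aplus p v -> x u * y v = x v * y u).
Proof.
move=> xy_indep xy_prop.
have xy0 w : Aplus p w -> x w = 0 /\ y w = 0.
  move=> w_pos; have [-> /eqP] : y w = 0 /\ - x w = 0.
    by apply: xy_indep => u u_pos; rewrite mulNr (xy_prop w u) // mulrC subrr.
  by rewrite oppr_eq0 => /eqP.
have [/eqP] : (1 : K) = 0 /\ (0 : K) = 0.
  by apply: xy_indep => u u_pos; have [-> ->] := xy0 u u_pos; rewrite !mulr0 addr0.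
by rewrite oner_eq0.
Qed.

End RelativeCochains.

Theorem lemma4p14 (R : realType) (g : vectType R[i]) (br : g -> g -> g)
  (A : comAlgType R[i]) (p : nat -> A -> A) (x y : A -> R[i])
  (e : (\dim {: g}%VS).-tuple g) :
  lie_bracket br -> semisimple br -> (0 < \dim {: g}%VS)%N ->
  graded_algebra p ->
  lin_Aplus p x -> lin_Aplus p y -> lin_indep2_Aplus p x y ->
  (forall u v : A, Aplus p u -> Aplus p v -> x (u * v) = 0) ->
  (forall u v : A, Aplus p u -> Aplus p v -> y (u * v) = 0) ->
  basis_of fullv e ->
  (forall i j : 'I_(\dim {: g}%VS),
      killing br (tnth e i) (tnth e j) = (i == j)%:R) ->
  [/\ rel_cochain2 br p (phi_xy e x y),
      (forall (a1 a2 a3 : g) (u1 u2 u3 : A),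
          Aplus p u1 -> Aplus p u2 -> Aplus p u3 ->
          ce_d2 br (phi_xy e x y) a1 u1 a2 u2 a3 u3 = 0) &
      ~ (exists psi : g -> A -> R[i],
           rel_cochain1 br p psi /\
           forall (a b : g) (u v : A), Aplus p u -> Aplus p v ->
             phi_xy e x y a u b v = ce_d1 br psi a u b v)].
Proof.
move=> br_lie _ dim_pos p_graded x_lin y_lin xy_indep x_mul y_mul e_basis e_orth.
have killing_coord := bilinear_orthonormalE e_basis
  (killing_linearl br_lie) (killing_linearr br_lie) e_orth.
have phiE a u b v : phi_xy e x y a u b v = wedge_cochain (killing br) x y a u b v.
  by rewrite /phi_xy /wedge_cochain killing_coord mulr_suml; apply: eq_bigr => i _; ring.
have killing_sym a b : killing br a b = killing br b a.
  by rewrite !killing_coord; apply: eq_bigr => i _; rewrite mulrC.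
split.
- apply: (rel_cochain2_ext phiE); apply: wedge_rel_cochain2 => //.
  + exact: killing_linearl.
  + exact: killing_invariant.
- move=> a1 a2 a3 u1 u2 u3 u1_pos u2_pos u3_pos.
  have := wedge_cocycle br (killing br) x_mul y_mul a1 a2 a3 u1_pos u2_pos u3_pos.
  by rewrite /ce_d2 !phiE.
case=> psi [psi_rel d_psi]; apply: (lin_indep2_Aplus_not_proportional xy_indep).
move=> u v u_pos v_pos; pose e0 := tnth e (Ordinal dim_pos).
have := d_psi e0 e0 u v u_pos v_pos.
rewrite phiE (rel_coboundary1_eq0 p_graded psi_rel) // /wedge_cochain e_orth eqxx mul1r.
by move/eqP; rewrite subr_eq0 => /eqP.
Qed.
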